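(* Let $\Omega \subseteq \mathbb{R}^n$ be open, let $F \in C^1(\Omega,\mathbb{R}^n)$, and fix a vector norm $\|\cdot\|$ on $\mathbb{R}^n$ together with its induced matrix norm. Assume there are nonnegative numbers $K, L, M$ such that for all $x, y \in \Omega$, $F'(x)$ is nonsingular and \[ \|F'(x)^{-1}\| \le K, \qquad \|F'(x)-F'(y)\| \le L\|x-y\|, \qquad \|F'(x)\| \le M. \] Let $z \in \Omega$ satisfy $F(z)=0$. Define $g(x) = x - F'(x)^{-1}F(x)$ for $x \in \Omega$. Let $x_k \in \Omega$ be such that the line segment $\{t x_k + (1-t) z : t\in[0,1]\}$ is contained in $\Omega$, let $D_k \in \mathbb{R}^{n\times n}$ be a diagonal matrix and $E_k \in \mathbb{R}^{n\times n}$ any matrix, and define \[ x_{k+1} = (I + D_k)\Big( g(x_k) - E_k F'(x_k)^{-1}F(x_k) \Big). \] Then \[ x_{k+1} - z = g(x_k) - z - E_kF'(x_k)^{-1}F(x_k) + D_k\big[ g(x_k) - E_kF'(x_k)^{-1}F(x_k)\big] \] and \[ \|x_{k+1}-z\| \le \tfrac12 LK\|x_k-z\|^2 + \|E_k\|KM\|x_k-z\| + \|D_k\|\Big( \|z\| + \tfrac12 LK\|x_k-z\|^2 + \|E_k\|KM\|x_k-z\| \Big). \]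
   Context: $F'$ denotes the Jacobian of $F$ and $I$ the $n\times n$ identity matrix. The iteration models a quasi-Newton method in finite precision: $D_k$ represents rounding error in the subtraction and $E_k$ represents the relative discrepancy between the computed correction and the exact Newton correction $F'(x_k)^{-1}F(x_k)$. *)

From HB Require Import structures.
From mathcomp Require Import all_boot all_order all_algebra.
From mathcomp Require Import all_classical all_reals all_analysis.
Set Implicit Arguments. Unset Strict Implicit. Unset Printing Implicit Defensive.
Import Order.TTheory GRing.Theory Num.Theory.
Import numFieldNormedType.Exports.
Local Open Scope classical_set_scope.
Local Open Scope ring_scope.

Definition is_vector_norm (R : realType) (n : nat) (nv : 'cV[R]_n -> R) : Prop :=
  [/\ forall x, 0 <= nv x,
      forall x, nv x = 0 -> x = 0,
      forall (a : R) x, nv (a *: x) = `|a| * nv x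
    & forall x y, nv (x + y) <= nv x + nv y].

Definition induced_norm (R : realType) (n : nat) (nv : 'cV[R]_n -> R)
  (A : 'M[R]_n) : R :=
  sup [set nv (A *m x) | x in [set x : 'cV[R]_n | nv x <= 1]].

Definition has_jacobian (R : realType) (n : nat) (F : 'cV[R]_n -> 'cV[R]_n)
  (J : 'M[R]_n) (x : 'cV[R]_n) : Prop :=
  differentiable F x /\ forall h, 'd F x h = J *m h.

From HB Require Import structures.
From mathcomp Require Import all_boot all_order all_algebra.
From mathcomp Require Import all_classical all_reals all_analysis.
From mathcomp Require Import ring lra.
Set Implicit Arguments.
Unset Strict Implicit.
Import Order.TTheory GRing.Theory Num.Theory.
Import numFieldNormedType.Exports.
Local Open Scope classical_set_scope.
Local Open Scope ring_scope.

(** For the estimate write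
   [h = x - z]; since [F z = 0],
   [g x - z = - F'(x)^-1 (F x - F z - F'(x) h)], so everything reduces to
   [||F x - F z - F'(x) h|| <= L/2 ||h||^2] and [||F x - F z|| <= M ||h||].
   Both follow from a mean value inequality along the segment from [z] to
   [x], proved by continuous induction for an arbitrary norm: the
   derivative [t |-> (F'(z + t h) - F'(x)) h] has norm at most
   [L (1 - t) ||h||^2], whose integral is [L/2 ||h||^2].  The induced matrix
   norm is well behaved because all norms on [R^n] are equivalent. *)

Section MatrixNorm.
Variable R : realType.

Lemma mx_norm_entry_le m p (A : 'M[R]_(m, p)) i j : `|A i j| <= `|A|.
Proof.
rewrite [leRHS]/Num.Def.normr /= mx_normrE; apply/bigmax_geP; right => /=.
by exists (i, j).
Qed.

Lemma mx_norm_le m p (A : 'M[R]_(m, p)) (c : R) :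
  0 <= c -> (forall i j, `|A i j| <= c) -> `|A| <= c.
Proof.
move=> c0 Ac; rewrite [leLHS]/Num.Def.normr /= mx_normrE.
by apply: bigmax_le => // -[i j] _; exact: Ac.
Qed.

Lemma mx_normT m p (A : 'M[R]_(m, p)) : `|A^T| = `|A|.
Proof.
apply/le_anti/andP; split; apply: mx_norm_le => // i j.
  by rewrite mxE; exact: mx_norm_entry_le.
by have := mx_norm_entry_le A^T j i; rewrite mxE.
Qed.

Lemma compact_rV_unit_sphere n : compact [set v : 'rV[R]_n | `|v| = 1].
Proof.
apply: bounded_closed_compact.
  exists 1; split; first by rewrite num_real.
  by move=> c c1 v /= ->; exact: ltW.
apply: (@closed_comp _ _ (@Num.Def.normr R 'rV[R]_n) [set 1]).
  by move=> v _; exact: norm_continuous.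
exact: closed_eq.
Qed.

End MatrixNorm.

Lemma lipschitz_continuous (R : realType) (V : normedModType R) (f : V -> R) (C : R) :
  0 <= C -> (forall x y, `|f x - f y| <= C * `|x - y|) -> continuous f.
Proof.
move=> C0 fC x; have C1 : 0 < C + 1 by rewrite ltr_wpDl.
apply/cvgrPdist_lt => e e0; near=> y.
apply: le_lt_trans (fC x y) _.
apply: (@le_lt_trans _ _ ((C + 1) * `|x - y|)); first by rewrite ler_wpM2r ?lerDl.
rewrite mulrC -ltr_pdivlMr //; near: y.
by apply/nbhs_normP; exists (e / (C + 1)); rewrite /= ?divr_gt0.
Unshelve. all: by end_near.
Qed.

Lemma differentiable_approx (R : realType) (V W : normedModType R) (f : V -> W) x :
  differentiable f x -> forall e : R, 0 < e -> exists2 d : R, 0 < d &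
  forall h, `|h| < d -> `|f (x + h) - f x - 'd f x h| <= e * `|h|.
Proof.
move=> /diff_locally /eqaddoP fo e e0.
have /nbhs_ballP[d d0 Hd] := fo e e0.
exists d => // h hd.
have := Hd h; rewrite -ball_normE /ball_ /= sub0r normrN => /(_ hd).
by rewrite /shift /= !fctE [h + x]addrC opprD addrA.
Qed.

Section VectorNorm.
Variables (R : realType) (n : nat) (nv : 'cV[R]_n -> R).
Hypothesis nvP : is_vector_norm nv.

Lemma nv_ge0 x : 0 <= nv x. Proof. by case: nvP. Qed.
Lemma nv_eq0 x : nv x = 0 -> x = 0. Proof. by case: nvP => _ H _ _; exact: H. Qed.
Lemma nvZ a x : nv (a *: x) = `|a| * nv x. Proof. by case: nvP. Qed.
Lemma nvD x y : nv (x + y) <= nv x + nv y. Proof. by case: nvP. Qed.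

Lemma nv0 : nv 0 = 0.
Proof. by rewrite -(scale0r (0 : 'cV[R]_n)) nvZ normr0 mul0r. Qed.

Lemma nvN x : nv (- x) = nv x.
Proof. by rewrite -scaleN1r nvZ normrN normr1 mul1r. Qed.

Lemma nvB x y : nv (x - y) <= nv x + nv y.
Proof. by rewrite -(nvN y); exact: nvD. Qed.

Lemma nv_sum (I : Type) (r : seq I) (P : pred I) (f : I -> 'cV[R]_n) :
  nv (\sum_(i <- r | P i) f i) <= \sum_(i <- r | P i) nv (f i).
Proof.
elim/big_rec2: _ => [|i y1 y2 _ IH]; first by rewrite nv0.
exact: le_trans (nvD _ _) (lerD (lexx _) IH).
Qed.

Lemma nv_mulmx_le_mx_norm (A : 'M[R]_n) y :
  nv (A *m y) <= (\sum_j nv (A *m delta_mx j 0)) * `|y|.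
Proof.
have yE : y = \sum_j y j 0 *: delta_mx j 0.
  apply/matrixP => i k; rewrite (ord1 k) summxE (bigD1 i) //= big1 ?addr0.
    by rewrite !mxE !eqxx mulr1.
  by move=> j /negbTE ji; rewrite !mxE eq_sym ji mulr0.
rewrite {1}yE mulmx_sumr mulr_suml; apply: le_trans (nv_sum _ _ _) _.
apply: ler_sum => j _; rewrite -scalemxAr nvZ mulrC ler_wpM2l ?nv_ge0 //.
exact: mx_norm_entry_le.
Qed.

Lemma nv_dist_le x y : `|nv x - nv y| <= nv (x - y).
Proof.
rewrite ler_norml; apply/andP; split.
  by have := nvD (y - x) x; rewrite subrK -[y - x]opprB nvN; lra.
by have := nvD (x - y) y; rewrite subrK; lra.
Qed.

Lemma nv_le_mx_norm : exists2 C, 0 <= C & forall x, nv x <= C * `|x|.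
Proof.
exists (\sum_j nv (delta_mx j 0)); first by apply: sumr_ge0 => j _; exact: nv_ge0.
move=> x; have := nv_mulmx_le_mx_norm 1%:M x; rewrite mul1mx.
by under eq_bigr do rewrite mul1mx.
Qed.

Lemma nv_trmx_continuous : continuous (fun v : 'rV[R]_n => nv v^T).
Proof.
have [C C0 nvC] := nv_le_mx_norm.
apply: (lipschitz_continuous C0) => v w.
apply: le_trans (nv_dist_le _ _) _; rewrite -linearB.
by apply: le_trans (nvC _) _; rewrite mx_normT.
Qed.

Lemma mx_norm_le_nv : exists2 c, 0 < c & forall x, `|x| <= c * nv x.
Proof.
have [[x0 x0_neq0]|all0] := pselect (exists x : 'cV[R]_n, x != 0); last first.
  exists 1 => // x; suff -> : x = 0 by rewrite normr0 nv0 mulr0.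
  by apply/eqP; apply: contra_notT all0 => ?; exists x.
(* [nv] has a positive minimum on the unit sphere of the max norm, taken in
   row vectors, where compactness of bounded closed sets is available. *)
pose S := [set v : 'rV[R]_n | `|v| = 1].
have normalize x : x != 0 -> S (`|x|^-1 *: x^T).
  move=> x_neq0; rewrite /S /= normrZ mx_normT normrV ?unitfE ?normr_eq0 //.
  by rewrite normr_id mulVf // normr_eq0.
have [c Sc cmin] := compact_EVT_min (ex_intro _ _ (normalize x0 x0_neq0))
   (@compact_rV_unit_sphere R n) (continuous_subspaceT nv_trmx_continuous).
have c_gt0 : 0 < nv c^T.
  rewrite lt_def nv_ge0 andbT; apply/eqP => /nv_eq0/(congr1 trmx).
  rewrite trmxK trmx0 => c0; move: Sc; rewrite inE /S /= c0 normr0.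
  by move/eqP; rewrite eq_sym oner_eq0.
exists (nv c^T)^-1; first by rewrite invr_gt0.
move=> x; have [->|x_neq0] := eqVneq x 0; first by rewrite normr0 nv0 mulr0.
have := cmin _ (mem_set (normalize x x_neq0)).
rewrite linearZ /= trmxK nvZ normrV ?unitfE ?normr_eq0 // normr_id.
by rewrite ler_pdivlMl ?normr_gt0 // -ler_pdivlMr // mulrC.
Qed.

Lemma induced_norm_has_sup (A : 'M[R]_n) :
  has_sup [set nv (A *m x) | x in [set x | nv x <= 1]].
Proof.
split; first by exists (nv (A *m 0)), 0 => //=; rewrite nv0.
have [c c_gt0 xc] := mx_norm_le_nv.
have sum_ge0 : 0 <= \sum_j nv (A *m delta_mx j 0).
  by apply: sumr_ge0 => j _; exact: nv_ge0.
exists ((\sum_j nv (A *m delta_mx j 0)) * c) => _ [x /= x1 <-].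
apply: le_trans (nv_mulmx_le_mx_norm A x) _; rewrite ler_wpM2l //.
by apply: le_trans (xc x) _; rewrite ler_piMr ?(ltW c_gt0).
Qed.

Lemma induced_norm_ge0 (A : 'M[R]_n) : 0 <= induced_norm nv A.
Proof.
apply: le_trans (sup_upper_bound (induced_norm_has_sup A) _); last first.
  by exists 0; rewrite /= ?nv0.
by rewrite mulmx0 nv0.
Qed.

Lemma nv_mulmx_le (A : 'M[R]_n) x : nv (A *m x) <= induced_norm nv A * nv x.
Proof.
have [/nv_eq0 ->|x_neq0] := eqVneq (nv x) 0; first by rewrite mulmx0 nv0 mulr0.
have x_gt0 : 0 < nv x by rewrite lt_def x_neq0 nv_ge0.
have x1 : nv ((nv x)^-1 *: x) <= 1 by rewrite nvZ ger0_norm ?invr_ge0 ?nv_ge0 // mulVf.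
have := sup_upper_bound (induced_norm_has_sup A) (ex_intro2 _ _ ((nv x)^-1 *: x) x1 erefl).
by rewrite -scalemxAr nvZ ger0_norm ?invr_ge0 ?nv_ge0 // -ler_pdivrMr // mulrC.
Qed.

Lemma nv_perturbed_step_le (D E : 'M[R]_n) (z a q : 'cV[R]_n) (A Q : R) :
  nv a <= A -> nv q <= Q ->
  nv (a - E *m q + D *m (z + a - E *m q)) <=
  A + induced_norm nv E * Q + induced_norm nv D * (nv z + A + induced_norm nv E * Q).
Proof.
move=> aA qQ.
have Eq : nv (E *m q) <= induced_norm nv E * Q.
  by apply: le_trans (nv_mulmx_le _ _) _; rewrite ler_wpM2l ?induced_norm_ge0.
have w_le : nv (z + a - E *m q) <= nv z + A + induced_norm nv E * Q.
  by apply: le_trans (nvB _ _) _; have := nvD z a; lra.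
apply: le_trans (nvD _ _) _; apply: lerD; first by apply: le_trans (nvB _ _) _; lra.
by apply: le_trans (nv_mulmx_le _ _) _; rewrite ler_wpM2l ?induced_norm_ge0.
Qed.

Lemma has_jacobian_approx (F : 'cV[R]_n -> 'cV[R]_n) Jx x h :
  has_jacobian F Jx x -> forall e : R, 0 < e -> exists2 d : R, 0 < d &
  forall s : R, `|s| < d -> nv (F (x + s *: h) - F x - s *: (Jx *m h)) <= e * `|s|.
Proof.
move=> [dF dFE] e e0.
have [C C0 nvC] := nv_le_mx_norm.
have h1 : 0 < `|h| + 1 by rewrite ltr_wpDl.
pose k := (C + 1) * (`|h| + 1).
have k_gt0 : 0 < k by rewrite mulr_gt0 // ltr_wpDl.
have [d d0 Fd] := differentiable_approx dF (divr_gt0 e0 k_gt0).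
exists (d / (`|h| + 1)); first by rewrite divr_gt0.
move=> s s_lt; have sh_lt : `|s *: h| < d.
  rewrite normrZ; apply: le_lt_trans (_ : `|s| * (`|h| + 1) < _).
    by rewrite ler_wpM2l ?lerDl.
  by rewrite -ltr_pdivlMr.
have := Fd _ sh_lt; rewrite dFE -scalemxAr normrZ => Fs.
apply: le_trans (nvC _) _; apply: le_trans (ler_wpM2l C0 Fs) _.
rewrite -[in leRHS](divfK (lt0r_neq0 k_gt0) e) /k; set a := e / k.
have a0 : 0 <= a by rewrite divr_ge0 ?ltW.
have -> : a * ((C + 1) * (`|h| + 1)) * `|s| =
          C * (a * (`|s| * `|h|)) + a * `|s| * (C + `|h| + 1) by ring.
have : 0 <= C + `|h| + 1 by have := normr_ge0 h; lra.
by rewrite lerDl; apply: mulr_ge0 => //; exact: mulr_ge0.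
Qed.

End VectorNorm.

Lemma increment_le_local (R : realType) (V : zmodType) (N : V -> R) (f : R -> V)
    (psi : R -> R) :
  N 0 = 0 -> (forall x y, N (x + y) <= N x + N y) ->
  (forall t, 0 <= t <= 1 -> forall e : R, 0 < e -> exists2 d : R, 0 < d &
     forall a b, 0 <= a -> a <= b -> b <= 1 -> b - a < d -> a = t \/ b = t ->
       N (f b - f a) <= psi b - psi a + e * (b - a)) ->
  N (f 1 - f 0) <= psi 1 - psi 0.
Proof.
move=> N0 ND local; apply/ler_addgt0Pr => e e0.
pose P u := N (f u - f 0) <= psi u - psi 0 + e * u.
have P_step a b : N (f b - f a) <= psi b - psi a + e * (b - a) -> P a -> P b.
  by rewrite /P => ab; have := ND (f b - f a) (f a - f 0); rewrite addrA subrK; lra.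
(* Continuous induction: [P] holds at [sup S] by the local bound to its left,
   and would hold beyond [sup S < 1] by the local bound to its right. *)
pose S := [set t | 0 <= t <= 1 /\ P t].
have S0 : S 0 by split; [rewrite lexx ler01 | rewrite /P subrr N0 subrr mulr0 addr0].
have S_sup : has_sup S by split; [exists 0 | exists 1 => t [/andP[_ ->]]].
have s01 : 0 <= sup S <= 1.
  by rewrite (sup_upper_bound S_sup S0) ge_sup //; [exists 0 | move=> t [/andP[]]].
have [d d0 Hd] := local _ s01 e e0.
have [_ Ps] : S (sup S).
  have [t St st] := sup_adherent d0 S_sup.
  have ts := sup_upper_bound S_sup St; case: St => /andP[t0 _] Pt.
  split=> //; apply: P_step Pt; apply: Hd => //; [by case/andP: s01 | lra | by right].
suff s1 : sup S = 1 by move: Ps; rewrite /P s1 mulr1.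
apply/le_anti; rewrite (andP s01).2 /= leNgt; apply/negP => s_lt1.
pose t := Num.min (sup S + d / 2) 1.
have t1 : t <= 1 by rewrite ge_min lexx orbT.
have td : t <= sup S + d / 2 by rewrite ge_min lexx.
have st : sup S < t by rewrite lt_min s_lt1 andbT; lra.
have St : S t.
  split; first by rewrite t1 andbT; case/andP: s01; lra.
  by apply: P_step Ps; apply: Hd => //; [case/andP: s01 | lra | lra | left].
by have := sup_upper_bound S_sup St; lra.
Qed.

Definition has_derive01 {R : realType} {V : lmodType R} (N : V -> R) (f df : R -> V) :=
  forall t, 0 <= t <= 1 -> forall e : R, 0 < e -> exists2 d : R, 0 < d &
    forall u, 0 <= u <= 1 -> `|u - t| < d ->
      N (f u - f t - (u - t) *: df t) <= e * `|u - t|.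

Lemma mean_value_le (R : realType) (V : lmodType R) (N : V -> R) (f df : R -> V)
    (psi dpsi : R -> R) :
  (forall x y, N (x + y) <= N x + N y) -> (forall (a : R) x, N (a *: x) = `|a| * N x) ->
  has_derive01 N f df -> has_derive01 Num.norm psi dpsi ->
  (forall t, 0 <= t <= 1 -> N (df t) <= dpsi t) ->
  N (f 1 - f 0) <= psi 1 - psi 0.
Proof.
move=> ND NZ fd psid df_le.
have NN x : N (- x) = N x by rewrite -scaleN1r NZ normrN normr1 mul1r.
apply: (@increment_le_local R V N f psi) => //; first by rewrite -(scale0r 0) NZ normr0 mul0r.
move=> t t01 e e0; have e2 : 0 < e / 2 by rewrite divr_gt0.
have [d1 d1_gt0 fd1] := fd t t01 _ e2.
have [d2 d2_gt0 psid2] := psid t t01 _ e2.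
exists (Num.min d1 d2); first by rewrite lt_min d1_gt0 d2_gt0.
have near_t u : 0 <= u <= 1 -> `|u - t| < Num.min d1 d2 ->
    N (f u - f t) <= `|u - t| * dpsi t + e / 2 * `|u - t| /\
    `|psi u - psi t - (u - t) * dpsi t| <= e / 2 * `|u - t|.
  move=> u01; rewrite lt_min => /andP[ud1 ud2]; split; last exact: psid2.
  rewrite -[f u - f t](subrK ((u - t) *: df t)); apply: le_trans (ND _ _) _.
  by rewrite NZ addrC lerD ?fd1 // ler_wpM2l ?df_le.
move=> a b a0 ab b1 ba [ta|tb].
- subst a; have ba_abs : `|b - t| = b - t by rewrite ger0_norm ?subr_ge0.
  have [] := near_t b; rewrite ?ba_abs //; first by rewrite (le_trans a0).
  by move=> Nf /ler_normlP[Psi _]; lra.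
- subst b; have ba_abs : `|a - t| = t - a by rewrite ler0_norm ?subr_le0 ?opprB.
  have [] := near_t a; rewrite ?ba_abs //; first by rewrite a0 (le_trans ab).
  by rewrite -opprB NN => Nf /ler_normlP[_ Psi]; lra.
Qed.

Lemma has_derive01_subr (R : realType) (V : lmodType R) (N : V -> R) (f df : R -> V)
    (c : V) :
  has_derive01 N f df -> has_derive01 N (fun t => f t - t *: c) (fun t => df t - c).
Proof.
move=> fd t t01 e e0; have [d d_gt0 fdt] := fd t t01 e e0.
exists d => // u u01 ut.
suff -> : f u - u *: c - (f t - t *: c) - (u - t) *: (df t - c) =
          f u - f t - (u - t) *: df t by exact: fdt.
rewrite scalerBr opprB scalerBl opprB !addrA; congr (_ + _).
rewrite addrAC -!addrA; congr (_ + _).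
by rewrite addrC !addrA -scalerDl subrKC addrAC subrr add0r.
Qed.

Lemma has_derive01_quadratic (R : realType) (a b : R) :
  has_derive01 Num.norm (fun t => a * t + b * t ^+ 2) (fun t => a + 2 * b * t).
Proof.
move=> t _ e e0; have b1 : 0 < `|b| + 1 by rewrite ltr_wpDl.
exists (e / (`|b| + 1)); first by rewrite divr_gt0.
move=> u _; rewrite ltr_pdivlMr // => ut.
have -> : a * u + b * u ^+ 2 - (a * t + b * t ^+ 2) - (u - t) *: (a + 2 * b * t) =
          b * (u - t) ^+ 2 by rewrite -[(u - t) *: _]/((u - t) * _); ring.
rewrite normrM normrX expr2 mulrA; apply: ler_wpM2r => //.
by apply: le_trans (ltW ut); rewrite mulrC; apply: ler_wpM2l; rewrite ?lerDl.
Qed.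

Section Segment.
Variables (R : realType) (n : nat) (nv : 'cV[R]_n -> R) (F : 'cV[R]_n -> 'cV[R]_n)
  (J : 'cV[R]_n -> 'M[R]_n) (z h : 'cV[R]_n).
Hypothesis nvP : is_vector_norm nv.
Hypothesis FJ : forall t : R, 0 <= t <= 1 -> has_jacobian F (J (z + t *: h)) (z + t *: h).

Lemma has_derive01_segment :
  has_derive01 nv (fun t => F (z + t *: h)) (fun t => J (z + t *: h) *m h).
Proof.
move=> t t01 e e0; have [d d_gt0 Fd] := has_jacobian_approx nvP h (FJ t01) e0.
exists d => // u _ ut.
have -> : z + u *: h = z + t *: h + (u - t) *: h by rewrite -addrA -scalerDl subrKC.
exact: Fd.
Qed.

Lemma segment_increment_le (M : R) :
  (forall t, 0 <= t <= 1 -> induced_norm nv (J (z + t *: h)) <= M) ->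
  nv (F (z + h) - F z) <= M * nv h.
Proof.
move=> JM.
have df_le t : 0 <= t <= 1 -> nv (J (z + t *: h) *m h) <= M * nv h + 2 * 0 * t.
  move=> t01; rewrite mulr0 mul0r addr0.
  by apply: le_trans (nv_mulmx_le nvP _ _) _; rewrite ler_wpM2r ?nv_ge0 ?JM.
have := mean_value_le (nvD nvP) (nvZ nvP) has_derive01_segment
  (has_derive01_quadratic (M * nv h) 0) df_le.
by rewrite /= scale1r scale0r addr0; lra.
Qed.

Lemma segment_newton_remainder_le (L : R) :
  (forall t, 0 <= t <= 1 ->
     induced_norm nv (J (z + t *: h) - J (z + h)) <= L * nv (z + t *: h - (z + h))) ->
  nv (F (z + h) - F z - J (z + h) *m h) <= 2^-1 * L * nv h ^+ 2.
Proof.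
move=> JL; set c := L * nv h ^+ 2.
have df_le t : 0 <= t <= 1 ->
    nv (J (z + t *: h) *m h - J (z + h) *m h) <= c + 2 * (- (2^-1 * c)) * t.
  move=> /[dup] t01 /andP[_ t1]; rewrite -mulmxBl.
  apply: le_trans (nv_mulmx_le nvP _ _) _.
  apply: le_trans (ler_wpM2r (nv_ge0 nvP h) (JL t t01)) _.
  have -> : z + t *: h - (z + h) = (t - 1) *: h.
    by rewrite opprD addrACA subrr add0r scalerBl scale1r.
  by rewrite (nvZ nvP) ler0_norm ?subr_le0 // /c; lra.
have := mean_value_le (nvD nvP) (nvZ nvP)
  (has_derive01_subr (J (z + h) *m h) has_derive01_segment)
  (has_derive01_quadratic c (- (2^-1 * c))) df_le.
by rewrite /= !scale1r !scale0r !addr0 subr0 addrAC /c; lra.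
Qed.

End Segment.

Theorem theorem1 (R : realType) (n : nat) (Omega : set 'cV[R]_n)
  (F : 'cV[R]_n -> 'cV[R]_n) (J : 'cV[R]_n -> 'M[R]_n)
  (nv : 'cV[R]_n -> R) (K L M : R) (z xk : 'cV[R]_n) (Dk Ek : 'M[R]_n) :
  open Omega ->
  (forall x, Omega x -> has_jacobian F (J x) x) ->
  {within Omega, continuous J} ->
  is_vector_norm nv ->
  0 <= K -> 0 <= L -> 0 <= M ->
  (forall x y, Omega x -> Omega y ->
     [/\ J x \in unitmx,
         induced_norm nv (invmx (J x)) <= K,
         induced_norm nv (J x - J y) <= L * nv (x - y)
       & induced_norm nv (J x) <= M]) ->
  Omega z -> F z = 0 ->
  Omega xk ->
  (forall t : R, 0 <= t <= 1 -> Omega (t *: xk + (1 - t) *: z)) ->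
  is_diag_mx Dk ->
  let g := fun x => x - invmx (J x) *m F x in
  let xk1 := (1%:M + Dk) *m (g xk - Ek *m (invmx (J xk) *m F xk)) in
  xk1 - z = g xk - z - Ek *m (invmx (J xk) *m F xk)
            + Dk *m (g xk - Ek *m (invmx (J xk) *m F xk))
  /\
  nv (xk1 - z) <=
    2^-1 * L * K * nv (xk - z) ^+ 2
    + induced_norm nv Ek * K * M * nv (xk - z)
    + induced_norm nv Dk * (nv z + 2^-1 * L * K * nv (xk - z) ^+ 2
                            + induced_norm nv Ek * K * M * nv (xk - z)).
Proof.
move=> _ FJ _ nvP K0 _ _ JK _ Fz Oxk seg _ g xk1.
set q := invmx (J xk) *m F xk.
have xk1E : xk1 - z = g xk - z - Ek *m q + Dk *m (g xk - Ek *m q).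
  by rewrite /xk1 -/q mulmxDl mul1mx addrAC (addrAC (g xk)).
split=> //; set h := xk - z.
have xkE : z + h = xk by rewrite addrC subrK.
have Oseg t : 0 <= t <= 1 -> Omega (z + t *: h).
  by move=> /seg; rewrite scalerBl scale1r addrCA -scalerBr.
have Ozh : Omega (z + h) by rewrite xkE.
have FJseg t : 0 <= t <= 1 -> has_jacobian F (J (z + t *: h)) (z + t *: h).
  by move=> /Oseg/FJ.
have remainder : nv (F xk - F z - J xk *m h) <= 2^-1 * L * nv h ^+ 2.
  rewrite -xkE; apply: (segment_newton_remainder_le nvP FJseg) => t t01.
  by case: (JK _ _ (Oseg t t01) Ozh).
have increment : nv (F xk - F z) <= M * nv h.
  rewrite -xkE; apply: (segment_increment_le nvP FJseg) => t t01.
  by case: (JK _ _ (Oseg t t01) Ozh).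
have [Ju invK _ _] := JK _ _ Oxk Oxk.
have Ninv r : nv (invmx (J xk) *m r) <= K * nv r.
  by apply: le_trans (nv_mulmx_le nvP _ _) _; rewrite ler_wpM2r ?nv_ge0.
have a_le : nv (g xk - z) <= K * (2^-1 * L * nv h ^+ 2).
  have -> : g xk - z = - (invmx (J xk) *m (F xk - F z - J xk *m h)).
    by rewrite Fz subr0 mulmxBr mulKmx // opprB /g /h addrAC.
  by rewrite (nvN nvP); apply: le_trans (Ninv _) (ler_wpM2l K0 remainder).
have q_le : nv q <= K * (M * nv h).
  by rewrite /q -(subr0 (F xk)) -Fz; apply: le_trans (Ninv _) (ler_wpM2l K0 increment).
have := nv_perturbed_step_le nvP Dk Ek z a_le q_le.
rewrite xk1E (addrC z) subrK; lra.
Qed.
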